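(* Let $(V_o,w_o,\mu_o)$ be a simple weighted graph with adapted weight $\sigma_o$ and adapted path metric $d_{\sigma_o}$. Let $(V,w,\mu)$ be its modified graph with weight $\mathfrak n$, with adapted weight $\sigma$ and adapted path metric $d_\sigma$. Then: (1) $d_\sigma|_{V_o\times V_o}=d_{\sigma_o}$; (2) for every $x_0\in V_o$ and $r>0$, \[\mu_o\big(B_{d_{\sigma_o}}(x_0,r)\big)\le\mu\big(B_{d_\sigma}(x_0,r)\big)\le3\,\mu_o\big(B_{d_{\sigma_o}}(x_0,r)\big),\] where $B_{d_{\sigma_o}}(x_0,r)$ is a ball in $V_o$ and $B_{d_\sigma}(x_0,r)$ is a ball in $V$.
   Context: **Weighted graphs.** A simple weighted graph $(V,w,\mu)$ consists of a countably infinite set $V$, a symmetric function $w:V\times V\to[0,\infty)$ and a function $\mu:V\to(0,\infty)$. The graph with edges $\{x\sim y:w(x,y)>0\}$ is assumed to be locally finite, connected, and without loops or multiple edges. **Adapted weights and metrics.** An adapted weight is a symmetric $\sigma:E\to(0,1]$ with $\frac1{\mu(x)}\sum_y w(x,y)\sigma(x,y)^2\le1$ for all $x$. The adapted path metric $d_\sigma(x,y)$ is the infimum of $\sum_i\sigma(x_i,x_{i+1})$ over paths $x=x_0\sim\cdots\sim x_n=y$. Closed balls are $B_d(x,r)=\{y:d(x,y)\le r\}$. **Modified graph.** Fix an orientation $E_o^+$ of $E_o$, and let $\mathfrak n:E_o\to\mathbb N_+$ be symmetric with $\mathfrak n\ge2$. For $e=(x,y)\in E_o^+$, add distinct new vertices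 $x^e_1,\dots,x^e_{\mathfrak n(e)-1}$, set $x_0^e=x$, $x^e_{\mathfrak n(e)}=y$, and replace the edge $x\sim y$ by the path $x^e_0\sim\cdots\sim x^e_{\mathfrak n(e)}$. Weights and measure: - $w(x^e_i,x^e_{i+1})=\mathfrak n(e)w_o(e)$, symmetric, and $w=0$ otherwise; - $\mu=\mu_o$ on $V_o$, and $\mu(x^e_i)=2w_o(e)\sigma_o(e)^2/\mathfrak n(e)$ for $1\le i\le\mathfrak n(e)-1$; - $\sigma(x^e_i,x^e_{i+1})=\sigma_o(e)/\mathfrak n(e)$. *)

From HB Require Import structures.
From mathcomp Require Import all_boot all_order all_algebra.
From mathcomp Require Import all_classical all_reals all_analysis.
Set Implicit Arguments. Unset Strict Implicit. Unset Printing Implicit Defensive.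
Import Order.TTheory GRing.Theory Num.Theory.
Local Open Scope classical_set_scope.
Local Open Scope ring_scope.

Section Defs.
Variable R : realType.

Fixpoint is_walk (T : Type) (adj : T -> T -> Prop) (x : T) (p : seq T) : Prop :=
  match p with
  | [::] => True
  | y :: q => adj x y /\ is_walk adj y q
  end.

Fixpoint walk_len (T : Type) (s : T -> T -> R) (x : T) (p : seq T) : R :=
  match p with
  | [::] => 0
  | y :: q => s x y + walk_len s y q
  end.

Definition edge (T : Type) (w : T -> T -> R) (x y : T) : Prop := 0 < w x y.

Definition path_dist (T : Type) (w s : T -> T -> R) (x y : T) : R :=
  inf [set walk_len s x p | p in [set p | is_walk (edge w) x p /\ last x p = y]].

Definition ball_d (T : Type) (d : T -> T -> R) (x : T) (r : R) : set T :=
  [set y | d x y <= r].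

Definition vmeas (T : Type) (mu : T -> R) (A : set T) : \bar R :=
  @esum R {classic T} A (fun x => (mu x)%:E).

Definition weighted_graph (T : Type) (w : T -> T -> R) (mu : T -> R) : Prop :=
  [/\ countable [set: T] /\ infinite_set [set: T],
      (forall x y, 0 <= w x y) /\ (forall x y, w x y = w y x),
      (forall x, w x x = 0) /\ (forall x, 0 < mu x),
      (forall x, finite_set [set y | edge w x y]) &
      (forall x y, exists p, is_walk (edge w) x p /\ last x p = y)].

Definition adapted (T : Type) (w : T -> T -> R) (mu : T -> R) (s : T -> T -> R) : Prop :=
  [/\ (forall x y, edge w x y -> 0 < s x y <= 1),
      (forall x y, edge w x y -> s x y = s y x) &
      (forall x, (((mu x)^-1)%:E *
          @esum R {classic T} [set y | edge w x y] (fun y => (w x y * s x y ^+ 2)%:E)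
          <= 1)%E)].

Definition orientation (T : Type) (w : T -> T -> R) (ori : T -> T -> Prop) : Prop :=
  (forall x y, ori x y -> edge w x y) /\
  (forall x y, edge w x y -> (ori x y <-> ~ ori y x)).

(** new vertices x^e_i, e = (x,y) in E^+, 1 <= i <= n(e)-1 *)
Definition newV (T : Type) (ori : T -> T -> Prop) (n : T -> T -> nat) :=
  {t : T * T * nat | ori t.1.1 t.1.2 /\ (0 < t.2 < n t.1.1 t.1.2)%N}.

Definition modV (T : Type) (ori : T -> T -> Prop) (n : T -> T -> nat) :=
  (T + newV ori n)%type.

(** generic edge-function of the modified graph: value [f x y] on each
    subdivided segment x^e_i ~ x^e_{i+1} of e = (x,y), and 0 otherwise *)
Definition mod_edgefun (T : Type) (ori : T -> T -> Prop) (n : T -> T -> nat)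
    (f : T -> T -> R) (u v : modV ori n) : R :=
  match u, v with
  | inl _, inl _ => 0
  | inl a, inr t | inr t, inl a =>
      let '(x, y, i) := sval t in
      if `[< (a = x /\ i = 1%N) \/ (a = y /\ i = (n x y).-1) >] then f x y else 0
  | inr t, inr t' =>
      let '(x, y, i) := sval t in
      let '(x', y', j) := sval t' in
      if `[< x = x' /\ y = y' /\ (j = i.+1 \/ i = j.+1) >] then f x y else 0
  end.

Definition mod_w (T : Type) (w : T -> T -> R) (ori : T -> T -> Prop)
    (n : T -> T -> nat) : modV ori n -> modV ori n -> R :=
  @mod_edgefun T ori n (fun x y => (n x y)%:R * w x y).

Definition mod_sigma (T : Type) (s : T -> T -> R) (ori : T -> T -> Prop)
    (n : T -> T -> nat) : modV ori n -> modV ori n -> R :=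
  @mod_edgefun T ori n (fun x y => s x y / (n x y)%:R).

Definition mod_mu (T : Type) (w : T -> T -> R) (mu : T -> R) (s : T -> T -> R)
    (ori : T -> T -> Prop) (n : T -> T -> nat) (u : modV ori n) : R :=
  match u with
  | inl a => mu a
  | inr t => let '(x, y, _) := sval t in 2 * w x y * s x y ^+ 2 / (n x y)%:R
  end.

End Defs.

Arguments mod_w {R T} w ori n _ _.
Arguments mod_sigma {R T} s ori n _ _.
Arguments mod_mu {R T} w mu s ori n _.

From HB Require Import structures.
From mathcomp Require Import all_boot all_order all_algebra.
From mathcomp Require Import all_classical all_reals all_analysis.
From mathcomp Require Import lra zify.
Import Order.TTheory GRing.Theory Num.Theory.
Local Open Scope classical_set_scope.
Local Open Scope ring_scope.
Set Implicit Arguments. Unset Strict Implicit. Unset Printing Implicit Defensive.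

(* (1) Each edge e of the original graph becomes a path of n(e) segments of
   length sigma_o(e)/n(e), so every walk lifts to a walk of the same length and
   d_sigma <= d_{sigma_o} on V_o.  Conversely, the function extending
   d_{sigma_o}(x0, .) linearly along each subdivided edge grows by at most
   sigma along every edge of the modified graph, hence bounds d_sigma(x0, .)
   from below.
   (2) Old vertices keep their mass and their distances, which gives the lower
   bound.  A new vertex of the sigma-ball lies on an edge with an endpoint a in
   the sigma_o-ball, and the new vertices on the edges at a weigh at most
   sum_y 2 w_o(a,y) sigma_o(a,y)^2 <= 2 mu_o(a) by adaptedness. *)

Section Walks.
Variables (R : realType) (T : Type).
Implicit Types (adj : T -> T -> Prop) (s : T -> T -> R).

Lemma is_walk_cat adj x p q :
  is_walk adj x (p ++ q) <-> is_walk adj x p /\ is_walk adj (last x p) q.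
Proof. by elim: p x => [|y p IH] x /=; [tauto|rewrite IH; tauto]. Qed.

Lemma walk_len_cat s x p q :
  walk_len s x (p ++ q) = walk_len s x p + walk_len s (last x p) q.
Proof. by elim: p x => [|y p IH] x /=; rewrite ?add0r // IH addrA. Qed.

Lemma walk_len_ge0 adj s x p : (forall u v, adj u v -> 0 <= s u v) ->
  is_walk adj x p -> 0 <= walk_len s x p.
Proof.
move=> s_ge0; elim: p x => [|y p IH] x //= [xy hp].
by rewrite addr_ge0 ?s_ge0 ?IH.
Qed.

Lemma lipschitz_le_walk_len adj s (phi : T -> R) x p :
  (forall u v, adj u v -> phi v <= phi u + s u v) ->
  is_walk adj x p -> phi (last x p) <= phi x + walk_len s x p.
Proof.
move=> phi_lip; elim: p x => [|y p IH] x /=; first by rewrite addr0.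
by move=> [/phi_lip xy /IH hp]; lra.
Qed.

Lemma walk_of_chain adj s (c : nat -> T) h j m :
  (forall k, (j <= k < j + m)%N -> adj (c k) (c k.+1) /\ s (c k) (c k.+1) = h) ->
  [/\ is_walk adj (c j) (map c (iota j.+1 m)),
      last (c j) (map c (iota j.+1 m)) = c (j + m)%N &
      walk_len s (c j) (map c (iota j.+1 m)) = m%:R * h].
Proof.
elim: m j => [|m IH] j hc /=; first by rewrite addn0 mul0r.
have [adj_j s_j] := hc j ltac:(lia).
have [walk_j last_j len_j] := IH j.+1 (fun k hk => hc k ltac:(lia)).
split=> //; first by rewrite last_j addSnnS.
by rewrite len_j s_j -natr1 mulrDl mul1r addrC.
Qed.

End Walks.

Section PathDist.
Variables (R : realType) (T : Type) (w s : T -> T -> R).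
Hypothesis s_ge0 : forall u v, edge w u v -> 0 <= s u v.

Lemma path_dist_le_walk_len x p y :
  is_walk (edge w) x p -> last x p = y -> path_dist w s x y <= walk_len s x p.
Proof.
move=> hp hl; suff: lbound [set walk_len s x q | q in
    [set q | is_walk (edge w) x q /\ last x q = y]] (path_dist w s x y).
  by apply; exists p.
by apply: ge_inf; exists 0 => _ [q [hq _] <-]; exact: walk_len_ge0 hq.
Qed.

Lemma le_path_dist x y c :
  (exists p, is_walk (edge w) x p /\ last x p = y) ->
  (forall p, is_walk (edge w) x p -> last x p = y -> c <= walk_len s x p) ->
  c <= path_dist w s x y.
Proof.
move=> [p hp] hc; apply: lb_le_inf; first by exists (walk_len s x p), p.
by move=> _ [q [hq hl] <-]; exact: hc.
Qed.

Lemma path_dist_xx x : path_dist w s x x = 0.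
Proof.
apply/eqP; rewrite eq_le (@path_dist_le_walk_len x [::] x) //=.
by apply: le_path_dist => [|p hp _]; [exists [::]|exact: walk_len_ge0 hp].
Qed.

Lemma path_dist_le_edge x y z :
  (exists p, is_walk (edge w) x p /\ last x p = y) -> edge w y z ->
  path_dist w s x z <= path_dist w s x y + s y z.
Proof.
move=> xy yz; rewrite -lerBlDr; apply: le_path_dist => // p hp hl.
have := @path_dist_le_walk_len x (p ++ [:: z]) z.
by rewrite lerBlDr is_walk_cat walk_len_cat last_cat hl /= addr0; apply.
Qed.

End PathDist.

Lemma le_esum_subset (R : realType) (U : choiceType) (A B : set U) (f : U -> \bar R) :
  A `<=` B -> (forall x, B x -> (0 <= f x)%E) -> (esum A f <= esum B f)%E.
Proof.
move=> AB f0; apply: ge_ereal_sup => _ [X [finX XA] <-].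
by apply: esum_ge; exists X => //; split => //; exact: subset_trans AB.
Qed.

Lemma esum_cst_ltn (R : realType) (c : R) m : 0 <= c ->
  esum [set i : nat | (i < m)%N] (fun=> c%:E) = (m%:R * c)%:E.
Proof.
move=> c0; elim: m => [|m IH].
  by rewrite mul0r (_ : [set _ | _] = set0) ?esum_set0 //; apply/seteqP; split.
rewrite (esumID [set m]) => [|*]; last by rewrite lee_fin.
have -> : [set i | (i < m.+1)%N] `&` [set m] = [set m].
  by apply/seteqP; split => x /=; [case|move=> ->].
have -> : [set i | (i < m.+1)%N] `&` ~` [set m] = [set i | (i < m)%N].
  by apply/seteqP; split => x /=; lia.
by rewrite esum_set1 ?lee_fin // IH -EFinD -natr1 mulrDl mul1r addrC.
Qed.

Section ModEdgefunSym.
Variables (R : realType) (T : Type) (ori : T -> T -> Prop) (n : T -> T -> nat).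

Lemma mod_edgefun_sym (f : T -> T -> R) (u v : modV ori n) :
  mod_edgefun f u v = mod_edgefun f v u :> R.
Proof.
case: u => [a|[[[x y] i] hi]]; case: v => [b|[[[x' y'] j] hj]] //=.
have -> : (x' = x /\ y' = y /\ (i = j.+1 \/ j = i.+1)) =
          (x = x' /\ y = y' /\ (j = i.+1 \/ i = j.+1)).
  by rewrite propeqE; split=> -[-> [-> ?]]; tauto.
by case: asboolP => // -[-> [-> _]].
Qed.

Lemma mod_w_sym (w : T -> T -> R) u v : mod_w w ori n u v = mod_w w ori n v u.
Proof. exact: mod_edgefun_sym. Qed.

Lemma mod_sigma_sym (s : T -> T -> R) u v :
  mod_sigma s ori n u v = mod_sigma s ori n v u.
Proof. exact: mod_edgefun_sym. Qed.

End ModEdgefunSym.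

Section ModifiedGraph.
Variables (R : realType) (T : Type) (w s : T -> T -> R)
  (ori : T -> T -> Prop) (n : T -> T -> nat).
Hypothesis w_sym : forall x y, w x y = w y x.
Hypothesis s_gt0 : forall x y, edge w x y -> 0 < s x y.
Hypothesis s_sym : forall x y, edge w x y -> s x y = s y x.
Hypothesis ori_edge : forall x y, ori x y -> edge w x y.
Hypothesis ori_asym : forall x y, edge w x y -> (ori x y <-> ~ ori y x).
Hypothesis n_ge2 : forall x y, edge w x y -> (2 <= n x y)%N.
Hypothesis w_connected : forall x y, exists p, is_walk (edge w) x p /\ last x p = y.

Local Notation V := (modV ori n).
Local Notation W := (mod_w w ori n).
Local Notation S := (mod_sigma s ori n).
Local Notation d := (path_dist w s).
Local Notation D := (path_dist W S).

Lemma s_ge0 x y : edge w x y -> 0 <= s x y.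
Proof. by move=> /s_gt0 /ltW. Qed.

Lemma edge_sym x y : edge w x y -> edge w y x.
Proof. by rewrite /edge w_sym. Qed.

Lemma edge_ori x y : edge w x y -> ori x y \/ ori y x.
Proof.
move=> xy; case: (pselect (ori y x)) => h; first by right.
by left; exact: (proj2 (ori_asym xy) h).
Qed.

Lemma mod_w_seg_gt0 x y : ori x y -> 0 < (n x y)%:R * w x y.
Proof. by move=> /ori_edge xy; rewrite mulr_gt0 // ltr0n; have := n_ge2 xy; lia. Qed.

Lemma seg_len_ge0 x y : ori x y -> 0 <= s x y / (n x y)%:R.
Proof. by move=> /ori_edge xy; rewrite divr_ge0 ?s_ge0. Qed.

Lemma seg_len_total x y : ori x y -> (n x y)%:R * (s x y / (n x y)%:R) = s x y.
Proof.
move=> /ori_edge xy; rewrite mulrCA mulfV ?mulr1 // pnatr_eq0.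
by have := n_ge2 xy; lia.
Qed.

Lemma mod_sigma_ge0 u v : 0 <= S u v.
Proof.
case: u => [a|[[[x y] i] [H hi]]]; case: v => [b|[[[x' y'] j] [H' hj]]] //=;
  by case: asboolP => // _; exact: seg_len_ge0.
Qed.

(* [d x0] extended linearly along every subdivided edge. *)
Definition subdiv_dist (x0 : T) (u : V) : R :=
  match u with
  | inl a => d x0 a
  | inr t => let '(x, y, i) := sval t in
      Num.min (d x0 x + i%:R * (s x y / (n x y)%:R))
              (d x0 y + ((n x y)%:R - i%:R) * (s x y / (n x y)%:R))
  end.

Lemma subdiv_dist_lipschitz x0 u v :
  edge W u v -> subdiv_dist x0 v <= subdiv_dist x0 u + S u v.
Proof.
have d_edge y z : edge w y z -> d x0 z <= d x0 y + s y z.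
  by apply: path_dist_le_edge; [exact: s_ge0|exact: w_connected].
case: u => [a|[[[x y] i] [H hi]]]; case: v => [b|[[[x' y'] j] [H' hj]]];
  rewrite /edge /mod_w /mod_sigma /mod_edgefun /subdiv_dist /=; simpl in *.
- by rewrite ltxx.
- case: asboolP => [c _|_]; last by rewrite ltxx.
  have h0 := seg_len_ge0 H'.
  have e : (n x' y').-1.+1 = n x' y' by rewrite prednK //; lia.
  case: c => -[-> ->]; rewrite ge_min; apply/orP; [left|right]; first lra.
  rewrite -[X in X%:R - _]e -natr1; lra.
- case: asboolP => [c _|_]; last by rewrite ltxx.
  have h0 := seg_len_ge0 H; have hN := seg_len_total H.
  have e1 := d_edge _ _ (ori_edge H).
  have e2 := d_edge _ _ (edge_sym (ori_edge H)); rewrite -(s_sym (ori_edge H)) in e2.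
  set h := s x y / _ in h0 hN *; set N := (n x y)%:R in hN *.
  have e : ((n x y).-1)%:R = N - 1 :> R.
    rewrite /N -[in RHS](@prednK (n x y)) -?natr1 ?addrK //.
    by have := n_ge2 (ori_edge H); lia.
  rewrite -lerBlDr le_min; case: c => -[-> ->]; apply/andP; split; rewrite ?e; lra.
- case: asboolP => [[ex [ey c]]|_]; last by rewrite ltxx.
  move=> _; subst x' y'; have h0 := seg_len_ge0 H.
  set h := s x y / _ in h0 *; set N := (n x y)%:R.
  rewrite -lerBlDr le_min; apply/andP; split; rewrite lerBlDr ge_min;
    apply/orP; [left|right]; case: c => ->; rewrite -?natr1; lra.
Qed.

(* The vertices x^e_0, ..., x^e_n(e) of the subdivision of e = (a, b) in E^+;
   for k >= n(e) the value is [inl b]. *)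
Definition subdiv_vertex a b (H : ori a b) (k : nat) : V :=
  match pselect (0 < k < n a b)%N with
  | left P => inr (exist _ (a, b, k) (conj H P))
  | right _ => if k == 0%N then inl a else inl b
  end.

Lemma subdiv_vertex0 a b (H : ori a b) : subdiv_vertex H 0 = inl a.
Proof. by rewrite /subdiv_vertex; case: pselect. Qed.

Lemma subdiv_vertexN a b (H : ori a b) : subdiv_vertex H (n a b) = inl b.
Proof.
rewrite /subdiv_vertex; case: pselect => [P|_]; first by move: P; lia.
by have := n_ge2 (ori_edge H); case: (n a b).
Qed.

Lemma subdiv_vertex_new a b (H : ori a b) k (P : (0 < k < n a b)%N) :
  subdiv_vertex H k = inr (exist _ (a, b, k) (conj H P)).
Proof.
rewrite /subdiv_vertex; case: pselect => [P'|]; last by [].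
by congr inr; congr exist; exact: Prop_irrelevance.
Qed.

Lemma subdiv_vertex_step a b (H : ori a b) k : (k < n a b)%N ->
  edge W (subdiv_vertex H k) (subdiv_vertex H k.+1) /\
  S (subdiv_vertex H k) (subdiv_vertex H k.+1) = s a b / (n a b)%:R.
Proof.
move=> hk; have wab := mod_w_seg_gt0 H.
rewrite /subdiv_vertex /edge /mod_w /mod_sigma /mod_edgefun.
case: (pselect (0 < k < n a b)%N) => Pk; case: (pselect (0 < k.+1 < n a b)%N) => Pk1 /=.
- by rewrite asboolT //; split=> //; split=> //; left.
- by rewrite asboolT //; right; split=> //; move: Pk1; lia.
- have -> /= : k = 0%N by move: Pk; lia.
  by rewrite asboolT //; left.
- by have := n_ge2 (ori_edge H); move: Pk Pk1; lia.
Qed.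

Lemma edge_lift a b : edge w a b -> exists q,
  [/\ is_walk (edge W) (inl a) q, last (inl a) q = inl b & walk_len S (inl a) q = s a b].
Proof.
move=> ab; case: (edge_ori ab) => H.
  have [walkq lastq lenq] := walk_of_chain (c := subdiv_vertex H) (j := 0) (m := n a b)
    (h := s a b / (n a b)%:R) (fun k hk => subdiv_vertex_step H (k := k) ltac:(lia)).
  rewrite subdiv_vertex0 add0n subdiv_vertexN seg_len_total // in walkq lastq lenq.
  by eexists; split; eassumption.
have back k : (0 <= k < 0 + n b a)%N ->
    edge W (subdiv_vertex H (n b a - k)) (subdiv_vertex H (n b a - k.+1)) /\
    S (subdiv_vertex H (n b a - k)) (subdiv_vertex H (n b a - k.+1)) = s b a / (n b a)%:R.
  move=> hk; have -> : (n b a - k = (n b a - k.+1).+1)%N by lia.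
  by rewrite /edge mod_w_sym mod_sigma_sym; apply: subdiv_vertex_step; lia.
have [walkq lastq lenq] := walk_of_chain back.
rewrite subn0 add0n subnn subdiv_vertex0 subdiv_vertexN seg_len_total // in walkq lastq lenq.
by rewrite -(s_sym ab) in lenq; eexists; split; eassumption.
Qed.

Lemma walk_lift x p : is_walk (edge w) x p -> exists q,
  [/\ is_walk (edge W) (inl x) q, last (inl x) q = inl (last x p) &
      walk_len S (inl x) q = walk_len s x p].
Proof.
elim: p x => [|y p IH] x /=; first by exists [::].
move=> [xy /IH [q2 [walk2 last2 len2]]]; have [q1 [walk1 last1 len1]] := edge_lift xy.
exists (q1 ++ q2); rewrite walk_len_cat last_cat last1 len1 len2; split=> //.
by apply/is_walk_cat; rewrite last1.
Qed.

Lemma mod_connected x0 u : exists q, is_walk (edge W) (inl x0) q /\ last (inl x0) q = u.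
Proof.
have reach_old a : exists q, is_walk (edge W) (inl x0) q /\ last (inl x0) q = inl a.
  have [p [hp <-]] := w_connected x0 a; have [q [? ? _]] := walk_lift hp.
  by exists q.
case: u => [a|[[[x y] i] [H hi]]]; first exact: reach_old.
have hin : (i < n x y)%N by case/andP: hi.
have [q1 [walk1 last1]] := reach_old x.
have [walk2 last2 _] := walk_of_chain (c := subdiv_vertex H) (j := 0) (m := i)
    (h := s x y / (n x y)%:R)
    (fun k hk => subdiv_vertex_step H (k := k) ltac:(simpl; move: hk hin; lia)).
rewrite subdiv_vertex0 add0n (subdiv_vertex_new H hi) in walk2 last2.
exists (q1 ++ map (subdiv_vertex H) (iota 1 i)).
by rewrite last_cat last1 last2; split=> //; apply/is_walk_cat; rewrite last1.
Qed.

Lemma subdiv_dist_le x0 u : subdiv_dist x0 u <= D (inl x0) u.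
Proof.
apply: le_path_dist; first exact: mod_connected.
move=> q hq <-; have := lipschitz_le_walk_len (@subdiv_dist_lipschitz x0) hq.
by rewrite /= path_dist_xx ?add0r //; exact: s_ge0.
Qed.

Lemma mod_path_dist_inl x y : D (inl x) (inl y) = d x y.
Proof.
apply/eqP; rewrite eq_le; apply/andP; split; last exact: (subdiv_dist_le x (inl y)).
apply: le_path_dist; first exact: w_connected.
move=> p hp <-; have [q [walkq lastq <-]] := walk_lift hp.
exact: (path_dist_le_walk_len (fun u v _ => mod_sigma_ge0 u v) walkq lastq).
Qed.

Variable mu : T -> R.
Hypothesis mu_gt0 : forall x, 0 < mu x.
Hypothesis s_adapted : forall x, (((mu x)^-1)%:E *
  esum (T := {classic T}) [set y | edge w x y] (fun y => (w x y * s x y ^+ 2)%:E) <= 1)%E.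

Local Notation NV := (newV ori n).
Local Notation M := (mod_mu w mu s ori n).

Lemma seg_mass_ge0 x y : ori x y -> 0 <= 2 * w x y * s x y ^+ 2 / (n x y)%:R.
Proof.
by move=> H; rewrite divr_ge0 // mulr_ge0 ?sqr_ge0 // mulr_ge0 // ltW // ori_edge.
Qed.

Lemma mod_mu_new_ge0 (t : NV) : 0 <= M (inr t).
Proof. by case: t => [[[x y] i] [H hi]]; exact: seg_mass_ge0. Qed.

Lemma mod_mu_ge0 u : 0 <= M u.
Proof. by case: u => [a|t]; [exact: ltW (mu_gt0 a)|exact: mod_mu_new_ge0]. Qed.

Definition new_mass (t : NV) : \bar R := (M (inr t))%:E.

Lemma new_mass_ge0 t : (0 <= new_mass t)%E.
Proof. by rewrite lee_fin mod_mu_new_ge0. Qed.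

Lemma esum_segment_mass a b : ori a b ->
  (esum (T := {classic NV}) [set t | (sval t).1 = (a, b)] new_mass <=
   (2 * w a b * s a b ^+ 2)%:E)%E.
Proof.
move=> H; set c := 2 * w a b * s a b ^+ 2 / (n a b)%:R.
have c_ge0 : 0 <= c := seg_mass_ge0 H.
have : set_bij (aT := {classic NV}) [set t | (sval t).1 = (a, b)]
    [set i | (0 < i < n a b)%N] (fun t => (sval t).2).
  split.
  - by move=> [[[x y] i] [H' hi]] /= [ex ey]; move: hi; rewrite /= ex ey.
  - move=> [[[x y] i] h1] [[[x' y'] j] h2]; rewrite !inE /= => -[? ?] [? ?] ?; subst.
    by congr exist; exact: Prop_irrelevance.
  - by move=> i /= hi; exists (exist _ (a, b, i) (conj H hi)).
move=> /(reindex_esum _ _ _ (fun=> c%:E)) /= reindex.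
rewrite (eq_esum (b := fun=> c%:E)) => [|[[[x y] i] ?] /= [-> ->] //].
rewrite -reindex (le_trans (le_esum_subset (B := [set i | (i < n a b)%N]) _ _)) //.
- by move=> i /andP[].
- by rewrite esum_cst_ltn // lee_fin /c mulrCA mulfV ?mulr1 // pnatr_eq0;
    have := n_ge2 (ori_edge H); lia.
Qed.

Lemma esum_incident_weight x :
  (esum (T := {classic T}) [set y | edge w x y] (fun y => (w x y * s x y ^+ 2)%:E)
    <= (mu x)%:E)%E.
Proof. by have := s_adapted x; rewrite lee_pdivrMl // mule1. Qed.

(* The edge a ~ y carries the new vertices of only one of its orientations. *)
Lemma esum_incident_mass a :
  (esum (T := {classic NV}) [set t | (sval t).1.1 = a \/ (sval t).1.2 = a] new_mass <=
   (mu a + mu a)%:E)%E.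
Proof.
set J := fun y : {classic T} =>
  [set t : {classic NV} | (sval t).1 = (a, y) \/ (sval t).1 = (y, a)].
have : set_bij (aT := ({classic T} * {classic NV})%type)
   ([set y : {classic T} | edge w a y] `*`` J)
   [set t : {classic NV} | (sval t).1.1 = a \/ (sval t).1.2 = a] snd.
  split.
  - by move=> [y [[[x' y'] i] hh]] /= [_ []] [-> ->]; [left|right].
  - move=> [y1 t1] [y2 t2]; rewrite !inE /= => -[_ h1] [_ h2] et; subst t2.
    congr pair; move: h1 h2; case: t1 => [[[x' y'] i] hh] /=.
    by case=> -[? ?]; case=> -[? ?]; subst.
  - move=> [[[x' y'] i] [H hi]] /= [ex|ey]; subst.
    + by exists (y', exist _ (a, y', i) (conj H hi)) => //; split; [exact: ori_edge|left].
    + exists (x', exist _ (x', a, i) (conj H hi)) => //.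
      by split; [exact: edge_sym (ori_edge H)|right].
move=> /(@reindex_esum R _ {classic NV} _ _ snd new_mass) /= ->.
rewrite -(esum_esum (a := fun (_ : {classic T}) (t : {classic NV}) => new_mass t)) => [|*];
  last exact: new_mass_ge0.
have edge_mass (y : {classic T}) : edge w a y ->
    (esum (J y) new_mass <= (w a y * s a y ^+ 2)%:E + (w a y * s a y ^+ 2)%:E)%E.
  move=> ay; rewrite -EFinD -mulr2n -mulr_natl mulrA.
  case: (edge_ori ay) => H.
    apply: le_trans (esum_segment_mass H).
    apply: le_esum_subset => [|*]; last exact: new_mass_ge0.
    move=> [[[x' y'] i] [H' hi]] /= [//|] [ex ey]; rewrite /= ex ey in H'.
    by have := proj1 (ori_asym (ori_edge H)) H.
  rewrite w_sym (s_sym ay).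
  apply: le_trans (esum_segment_mass H).
  apply: le_esum_subset => [|*]; last exact: new_mass_ge0.
  move=> [[[x' y'] i] [H' hi]] /= [[ex ey]|//]; rewrite /= ex ey in H'.
  by have := proj1 (ori_asym (ori_edge H)) H.
apply: le_trans (le_esum edge_mass) _.
have weight_ge0 y : edge w a y -> (0 <= (w a y * s a y ^+ 2)%:E)%E.
  by move=> ay; rewrite lee_fin mulr_ge0 ?sqr_ge0 // ltW.
by rewrite esumD // EFinD leeD // esum_incident_weight.
Qed.

Lemma esum_inl_mass (A : set T) :
  esum (T := {classic V}) (inl @` A) (fun u => (M u)%:E) = vmeas mu A.
Proof. by rewrite (@esum_image R {classic T} {classic V}) // => a b _ _ []. Qed.

Section Balls.
Variables (x0 : T) (r : R).
Local Notation B := (ball_d d x0 r).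
Local Notation B' := (ball_d D (inl x0) r).

Definition ball_endpoint (t : NV) : T :=
  if d x0 (sval t).1.1 <= r then (sval t).1.1 else (sval t).1.2.

Lemma ball_endpoint_in_ball t : B' (inr t) -> B (ball_endpoint t).
Proof.
rewrite /ball_d /ball_endpoint /= => /(le_trans (subdiv_dist_le x0 (inr t))).
case: t => [[[x y] i] [H hi]] /=; simpl in *.
have h0 := seg_len_ge0 H; set h := s x y / _ in h0 *.
have iN : (i%:R : R) <= (n x y)%:R by rewrite ler_nat; move: hi; lia.
have i0 : (0 : R) <= i%:R by exact: ler0n.
move=> hm; case: ifP => hx //; move: hm; rewrite ge_min => /orP[] hh.
- have : 0 <= i%:R * h by exact: mulr_ge0.
  move/negbT: hx; rewrite -ltNge => hx; lra.
- have : 0 <= ((n x y)%:R - i%:R) * h by apply: mulr_ge0 => //; lra.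
  lra.
Qed.

Lemma esum_new_ball_mass :
  (esum (T := {classic NV}) [set t | B' (inr t)] new_mass <= vmeas mu B + vmeas mu B)%E.
Proof.
set C := fun a : {classic T} =>
  [set t : {classic NV} | B' (inr t) /\ ball_endpoint t = a].
have : set_bij (aT := ({classic T} * {classic NV})%type) (B `*`` C)
    [set t | B' (inr t)] snd.
  split.
  - by move=> [a t] [_ [? _]].
  - by move=> [a1 t1] [a2 t2]; rewrite !inE /= => -[_ [_ <-]] [_ [_ <-]] ->.
  - move=> t ht; exists (ball_endpoint t, t) => //.
    by split => //=; exact: ball_endpoint_in_ball.
move=> /(@reindex_esum R _ {classic NV} _ _ snd new_mass) /= ->.
rewrite -(esum_esum (a := fun (_ : {classic T}) (t : {classic NV}) => new_mass t)) => [|*];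
  last exact: new_mass_ge0.
have vertex_mass (a : {classic T}) :
    B a -> (esum (C a) new_mass <= (mu a)%:E + (mu a)%:E)%E.
  move=> _; rewrite -EFinD; apply: le_trans (esum_incident_mass a).
  apply: le_esum_subset => [|*]; last exact: new_mass_ge0.
  move=> [[[x y] i] hh] /= [_]; rewrite /ball_endpoint /=.
  by case: ifP => _ ->; [left|right].
apply: le_trans (le_esum vertex_mass) _.
by rewrite esumD // => *; rewrite lee_fin ltW.
Qed.

Lemma mod_ball_inl : B' \o inl = B.
Proof. by apply/funext => a; rewrite /ball_d /= mod_path_dist_inl. Qed.

Lemma vmeas_ball_le_mod : (vmeas mu B <= vmeas M B')%E.
Proof.
rewrite -esum_inl_mass; apply: le_esum_subset => [_ [a Ba <-]|u _].
  by rewrite -mod_ball_inl in Ba.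
by rewrite lee_fin mod_mu_ge0.
Qed.

Lemma vmeas_mod_ball_le : (vmeas M B' <= 3%:E * vmeas mu B)%E.
Proof.
rewrite /vmeas (@esumID R {classic V} (range inl)) => [|u _];
  last by rewrite lee_fin mod_mu_ge0.
have -> : B' `&` range inl = inl @` B.
  apply/seteqP; split=> [u [Bu [a _ ea]]|_ [a Ba <-]].
    by subst u; exists a => //; rewrite -mod_ball_inl.
  by split; [rewrite -mod_ball_inl in Ba|exists a].
have -> : B' `&` ~` range inl = inr @` [set t | B' (inr t)].
  apply/seteqP; split=> [[a|t] [Bu Nu]|_ [t Bt <-]]; last by split=> // -[].
    by case: Nu; exists a.
  by exists t.
rewrite esum_inl_mass (@esum_image R {classic NV} {classic V}) => [|? ? _ _ []//].
by rewrite mule_natl muleS mule2n leeD // esum_new_ball_mass.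
Qed.

End Balls.

End ModifiedGraph.

Theorem lemma3p1 (R : realType) (T : Type) (w : T -> T -> R) (mu : T -> R)
    (s : T -> T -> R) (ori : T -> T -> Prop) (n : T -> T -> nat) :
  weighted_graph w mu ->
  adapted w mu s ->
  orientation w ori ->
  (forall x y, edge w x y -> n x y = n y x) ->
  (forall x y, edge w x y -> (2 <= n x y)%N) ->
  (forall x y : T,
     path_dist (mod_w w ori n) (mod_sigma s ori n) (inl x) (inl y) = path_dist w s x y) /\
  (forall (x0 : T) (r : R), 0 < r ->
     (vmeas mu (ball_d (path_dist w s) x0 r)
      <= vmeas (mod_mu w mu s ori n) (ball_d (path_dist (mod_w w ori n) (mod_sigma s ori n)) (inl x0) r)
      <= 3%:E * vmeas mu (ball_d (path_dist w s) x0 r))%E).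
Proof.
move=> [_ [_ w_sym] [_ mu_gt0] _ w_connected] [s_bounds s_sym s_adapted] [ori_edge ori_asym].
move=> _ n_ge2.
have s_gt0 x y : edge w x y -> 0 < s x y by move=> /s_bounds /andP[].
split=> [x y|x0 r _]; first exact: mod_path_dist_inl.
by rewrite vmeas_ball_le_mod ?vmeas_mod_ball_le.
Qed.
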